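(* If $d_1-p_1\ge d_2-p_2\ge\cdots\ge d_n-p_n$, then first-fit (equivalently next-fit) satisfies $FF(I)<2\,OPT(I)$ for every such instance $I$ with $OPT(I)\ge 2$ (and $FF(I)=1$ when $OPT(I)=1$); in particular first-fit is a 2-approximation on this class. The bound is tight: for every integer $k\ge1$ there is an instance of this class with $OPT(I)=k+1$ and $FF(I)=2k+1$, namely the instance with $3k+1$ jobs $a_1,\dots,a_k$ with $(p,d)=(k,2k)$, $b_1,\dots,b_k$ with $(p,d)=(1,k+1)$, and $c_1,\dots,c_{k+1}$ with $(p,d)=(k+1,2k+1)$, in the fixed order $a_1,b_1,a_2,b_2,\dots,a_k,b_k,c_1,c_2,\dots,c_{k+1}$ (all jobs have slack $k$), so that $\sup_I FF(I)/OPT(I)=2$ on this class.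
   Context: Fixed order scheduling with deadlines: there are jobs $J=\{1,\dots,n\}$, each job $j$ having a processing time $p_j\in\mathbb{N}$, $p_j>0$, and a deadline $d_j\in\mathbb{N}$ with $d_j\ge p_j$; the slack of job $j$ is $d_j-p_j$. All jobs are released at time $0$; job $j$ precedes job $k$ in the fixed order iff $j<k$. A schedule $\tau:J\to\{1,\dots,n\}$ assigns jobs to identical machines; each machine processes its jobs in the fixed order from time $0$ without idle time or preemption, so job $j$ completes at $\sum_{k\le j,\tau(k)=\tau(j)}p_k$; it is feasible if every job completes by its deadline. $OPT(I)$ is the minimum number of machines used by a feasible schedule. First-fit (FF): machines indexed $1,2,\dots$; process jobs in the fixed order and assign each job $j$ to the smallest-index machine whose current load (sum of processing times already assigned) plus $p_j$ is at most $d_j$; $FF(I)$ is the number of nonempty machines. Next-fit (NF): assign job $j$ to the most recently opened machine if it fits there, otherwise to a new machine. *)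

From mathcomp Require Import all_boot.
Set Implicit Arguments. Unset Strict Implicit. Unset Printing Implicit Defensive.

(* An instance is the list of jobs in the fixed order; job j (0-based index)
   is the pair (p_j, d_j) = (processing time, deadline). *)
Definition instance := seq (nat * nat).

Definition ptime (I : instance) (j : nat) : nat := (nth (0, 0) I j).1.
Definition dline (I : instance) (j : nat) : nat := (nth (0, 0) I j).2.
Definition slack (I : instance) (j : nat) : nat := dline I j - ptime I j.

Definition valid_instance (I : instance) : bool :=
  all (fun x => (0 < x.1) && (x.1 <= x.2)) I.

Definition slack_nonincr (I : instance) : Prop :=
  forall i j, i <= j -> j < size I -> slack I j <= slack I i.

Definition schedule (I : instance) := {ffun 'I_(size I) -> 'I_(size I)}.

Definition completion (I : instance) (tau : schedule I) (j : 'I_(size I)) : nat :=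
  \sum_(k < size I | (k <= j) && (tau k == tau j)) ptime I k.

Definition feasible (I : instance) (tau : schedule I) : bool :=
  [forall j : 'I_(size I), completion tau j <= dline I j].

Definition nmach (I : instance) (tau : schedule I) : nat :=
  #|[set tau j | j : 'I_(size I)]|.

(* OPT(I): minimum number of machines over feasible schedules (the
   one-job-per-machine schedule is feasible, so size I is a valid default). *)
Definition OPT (I : instance) : nat :=
  \big[minn/size I]_(tau : schedule I | feasible tau) nmach tau.

(* First-fit: loads = current loads of the opened machines, in index order. *)
Definition ff_step (loads : seq nat) (job : nat * nat) : seq nat :=
  let i := find (fun l => l + job.1 <= job.2) loads in
  if i < size loads then set_nth 0 loads i (nth 0 loads i + job.1)
  else rcons loads job.1.

Definition FF (I : instance) : nat := size (foldl ff_step [::] I).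

Definition nf_step (loads : seq nat) (job : nat * nat) : seq nat :=
  match loads with
  | [::] => [:: job.1]
  | x :: s =>
      if last x s + job.1 <= job.2
      then rcons (belast x s) (last x s + job.1)
      else rcons loads job.1
  end.

Definition NF (I : instance) : nat := size (foldl nf_step [::] I).

Definition tight_instance (k : nat) : instance :=
  flatten [seq [:: (k, 2 * k); (1, k + 1)] | _ <- iota 0 k]
  ++ nseq k.+1 (k + 1, 2 * k + 1).

(* Because slacks are nonincreasing, a machine on which job j does not fit
   (its load exceeds s_j) cannot take any later job either, so first-fit never
   returns to an earlier machine and coincides with next-fit.  Next-fit opens a
   new machine at job b exactly when the load of the current block [a, b)
   exceeds s_b.
   Fix a feasible schedule with m machines.  A machine M gets the potential
   phi_M(a) = load_M(a) / s_a while it still has a job of index >= a, the value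
   2 once all its jobs precede a, and 0 before its first job.  Feasibility
   gives load_M(a) <= s_a on active machines, so phi_M is at most 1 there and
   nondecreasing in a.  Every overflowing block [a, b) raises Phi = sum_M phi_M
   by at least 1, and by more than 1 when a = 0; since the machine of the last
   job stays active, Phi <= 2m - 1.  Hence next-fit closes at most 2m - 2
   blocks and uses fewer than 2m machines.
   In the tight instance the k + 1 jobs c_i pairwise conflict, which forces
   k + 1 machines, and an explicit schedule achieves this bound. *)

From mathcomp Require Import all_boot all_order all_algebra zify lra.
Set Implicit Arguments. Unset Strict Implicit. Unset Printing Implicit Defensive.
Import Order.TTheory GRing.Theory Num.Theory.

Lemma size_flatten_pairs (U T : Type) (s : seq U) (X Y : T) :
  size (flatten [seq [:: X; Y] | _ <- s]) = 2 * size s.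
Proof. by elim: s => //= _ s ->; rewrite mulnS. Qed.

Lemma nth_flatten_pairs (U T : Type) (s : seq U) (x0 X Y : T) j :
  nth x0 (flatten [seq [:: X; Y] | _ <- s]) j =
  if j < 2 * size s then (if odd j then Y else X) else x0.
Proof.
elim: s j => [|_ s IH] [|[|j]] //=; rewrite ?nth_nil ?mulnS //.
by rewrite IH negbK.
Qed.

Lemma sum_odd_nat m : \sum_(0 <= x < m | odd x) 1 = m./2.
Proof.
elim: m => [|m IH]; first by rewrite big_geq.
by rewrite big_mkcond big_nat_recr //= -big_mkcond IH; case: ifP; rewrite /=; lia.
Qed.

Lemma nseq_rcons (T : Type) (x : T) j : nseq j.+1 x = rcons (nseq j x) x.
Proof. by elim: j => //= j <-. Qed.

Lemma big_ord_range_recr n a j (F : nat -> nat) : j < n -> a <= j ->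
  \sum_(k < n | a <= k < j.+1) F k = \sum_(k < n | a <= k < j) F k + F j.
Proof.
move=> ltjn le_aj; rewrite (bigD1 (Ordinal ltjn)) /= ?le_aj ?ltnSn // addnC.
congr (_ + _); apply: eq_bigl => k; rewrite -val_eqE /= ltnS.
by case: (ltngtP k j) => [_ | _ | ->]; rewrite ?eqxx ?andbF ?andbT //= ltnW.
Qed.

Lemma big_ord_range1 n j (F : nat -> nat) : j < n ->
  \sum_(k < n | j <= k < j.+1) F k = F j.
Proof. by move=> ltjn; rewrite big_ord_range_recr // big_pred0 // => k; lia. Qed.

Lemma leq_sum_subpred (I : finType) (P Q : pred I) (F : I -> nat) :
  (forall i, P i -> Q i) -> \sum_(i | P i) F i <= \sum_(i | Q i) F i.
Proof.
move=> PQ; rewrite big_mkcond [X in _ <= X]big_mkcond /=; apply: leq_sum => i _.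
by case: ifP => // /PQ ->.
Qed.

Lemma nf_step_rcons ls L (job : nat * nat) :
  nf_step (rcons ls L) job =
  if L + job.1 <= job.2 then rcons ls (L + job.1) else rcons (rcons ls L) job.1.
Proof.
case: ls => [|x s] /=; first by case: ifP.
by rewrite last_rcons belast_rcons.
Qed.

Lemma ff_step_eq_nf_step ls L (job : nat * nat) :
  all (fun l => job.2 < l + job.1) ls ->
  ff_step (rcons ls L) job = nf_step (rcons ls L) job.
Proof.
move=> full; rewrite nf_step_rcons /ff_step -cats1 find_cat size_cat /=.
have -> : has (fun l => l + job.1 <= job.2) ls = false.
  by apply/negbTE/hasPn => l /(allP full); rewrite ltnNge.
case: (L + job.1 <= job.2) => /=; last by rewrite addn1 ltnn cats1.
rewrite addn0 addn1 ltnSn nth_cat ltnn subnn /= cats1.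
by elim: ls {full} => //= y ys ->.
Qed.

Lemma size_nf_step ls job : size (nf_step ls job) <= (size ls).+1.
Proof.
by case: ls => [|x s] //=; case: ifP; rewrite /= size_rcons ?size_belast.
Qed.

Lemma size_foldl_nf_step ls I : size (foldl nf_step ls I) <= size ls + size I.
Proof.
elim: I ls => [|job I IH] ls /=; first by rewrite addn0.
by rewrite (leq_trans (IH _)) // addnS -addSn leq_add2r size_nf_step.
Qed.

Lemma NF_le_size I : NF I <= size I.
Proof. exact: size_foldl_nf_step [::] I. Qed.

Section FirstFitIsNextFit.

Variable I : instance.
Hypothesis valid : valid_instance I.
Hypothesis nonincr : slack_nonincr I.

Lemma valid_job j : j < size I -> 0 < ptime I j /\ ptime I j <= dline I j.
Proof. by move=> ltj; have /allP/(_ _ (mem_nth (0, 0) ltj))/andP[] := valid. Qed.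

Lemma fits_slack j L : j < size I -> (L + ptime I j <= dline I j) = (L <= slack I j).
Proof. by move=> /valid_job[]; rewrite /slack; lia. Qed.

(* Every machine before the last one is loaded beyond the slack of the next
   job, so first-fit cannot use it for that job. *)
Lemma ff_nf_take j : j <= size I ->
  foldl ff_step [::] (take j I) = foldl nf_step [::] (take j I) /\
  (0 < j -> exists ls L, foldl nf_step [::] (take j I) = rcons ls L /\
     (j < size I -> all (fun l => slack I j < l) ls)).
Proof.
elim: j => [|j IH] ltj; first by rewrite take0.
have [IHeq IHshape] := IH (ltnW ltj).
rewrite (take_nth (0, 0) ltj) !foldl_rcons IHeq.
have [_ p_le_d] := valid_job ltj.
have slackS l : j.+1 < size I -> slack I j < l -> slack I j.+1 < l.
  by move=> ltj1; apply: leq_ltn_trans; apply: nonincr.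
case: (posnP j) => [-> | j_gt0].
  by rewrite take0; split=> // _; exists [::], (ptime I 0).
have [ls [L [-> closed]]] := IHshape j_gt0.
have {}closed := closed ltj.
rewrite ff_step_eq_nf_step; last first.
  by apply/allP => l /(allP closed); rewrite -/(ptime I j) -/(dline I j) /slack; lia.
split=> // _; rewrite nf_step_rcons -/(ptime I j) -/(dline I j) fits_slack //.
case: ifP => fitsL; [exists ls, (L + ptime I j) | exists (rcons ls L), (ptime I j)].
  by split=> // ltj1; apply/allP => l /(allP closed); apply: slackS.
split=> // ltj1; rewrite all_rcons slackS //; last by rewrite ltnNge fitsL.
by apply/allP => l /(allP closed); apply: slackS.
Qed.

Lemma FF_eq_NF : FF I = NF I.
Proof.
by have [+ _] := ff_nf_take (leqnn (size I)); rewrite take_size /FF /NF => ->.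
Qed.

Lemma NF_gt0 : 0 < size I -> 0 < NF I.
Proof.
move=> n_gt0; have [_ /(_ n_gt0) [ls [L]]] := ff_nf_take (leqnn (size I)).
by rewrite take_size /NF => -[-> _]; rewrite size_rcons.
Qed.

End FirstFitIsNextFit.

Section Schedule.

Variables (I : instance) (tau : schedule I).
Local Notation n := (size I).

Definition load (M : 'I_n) (a : nat) : nat :=
  \sum_(k < n | (k < a) && (tau k == M)) ptime I k.

Lemma completion_load j : completion tau j = load (tau j) j + ptime I j.
Proof.
rewrite /completion (bigD1 j) ?leqnn ?eqxx //= [RHS]addnC; congr (_ + _).
by apply: eq_bigl => k; rewrite ltn_neqAle [LHS]andbC andbA.
Qed.

Lemma feasible_of_load_le_slack : valid_instance I ->
  (forall j, load (tau j) j <= slack I j) -> feasible tau.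
Proof.
move=> valid load_le; apply/forallP => j; rewrite completion_load.
by have := load_le j; have [_] := valid_job valid (ltn_ord j); rewrite /slack; lia.
Qed.

Hypothesis feas : feasible tau.

Lemma load_le_slack j : load (tau j) j <= slack I j.
Proof. by have := forallP feas j; rewrite completion_load /slack; lia. Qed.

Lemma feasible_pair (i j : 'I_n) : i < j -> tau i = tau j -> ptime I i <= slack I j.
Proof.
move=> ltij tauij; apply: leq_trans (load_le_slack j).
by rewrite /load (bigD1 i) /= ?ltij ?tauij ?eqxx ?leq_addr.
Qed.

Lemma card_conflicting_le_nmach (S : {set 'I_n}) :
  {in S &, forall i j : 'I_n, i < j -> slack I j < ptime I i} -> #|S| <= nmach tau.
Proof.
move=> conflict; have tau_inj : {in S &, injective tau}.
  move=> i j iS jS tauij; apply/val_inj; case: (ltngtP i j) => // lt.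
    by have := feasible_pair lt tauij; rewrite leqNgt conflict.
  by have := feasible_pair lt (esym tauij); rewrite leqNgt conflict.
rewrite -(card_in_imset tau_inj) /nmach; apply/subset_leq_card/subsetP.
by move=> _ /imsetP[i _ ->]; apply: imset_f.
Qed.

End Schedule.

Section Potential.

Variable I : instance.
Hypothesis valid : valid_instance I.
Hypothesis nonincr : slack_nonincr I.
Variable tau : schedule I.
Hypothesis feas : feasible tau.
Local Notation n := (size I).
Local Notation p := (ptime I).
Local Notation s := (slack I).

Definition window_load (M : 'I_n) (a b : nat) : nat :=
  \sum_(k < n | (a <= k < b) && (tau k == M)) p k.

Definition active (M : 'I_n) (a : nat) : bool :=
  [exists k : 'I_n, (a <= k) && (tau k == M)].

Definition started (M : 'I_n) (a : nat) : bool :=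
  [exists k : 'I_n, (k < a) && (tau k == M)].

Lemma load0 M : load tau M 0 = 0.
Proof. by rewrite /load big_pred0. Qed.

Lemma load_window M a b : a <= b -> load tau M b = load tau M a + window_load M a b.
Proof.
move=> le_ab; rewrite /load /window_load (bigID (fun k : 'I_n => k < a)) /=.
by congr (_ + _); apply: eq_bigl => k;
  case: (tau k == M); rewrite ?andbT ?andbF //; lia.
Qed.

Lemma leq_load M a b : a <= b -> load tau M a <= load tau M b.
Proof. by move=> le_ab; rewrite (load_window M le_ab) leq_addr. Qed.

Lemma active_load_le_slack M a : active M a -> load tau M a <= s a.
Proof.
case/existsP => k /andP[le_ak /eqP <-].
apply: leq_trans (leq_load _ le_ak) _; apply: leq_trans (nonincr le_ak (ltn_ord k)).
exact: load_le_slack.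
Qed.

Lemma active_lt_size M a : active M a -> a < n.
Proof. by case/existsP => k /andP[le_ak _]; apply: leq_ltn_trans le_ak _. Qed.

Lemma active_le M a b : a <= b -> active M b -> active M a.
Proof.
move=> le_ab /existsP[k /andP[le_bk tauk]].
by apply/existsP; exists k; rewrite tauk (leq_trans le_ab).
Qed.

Lemma active_started M a b : active M a -> ~~ active M b -> started M b.
Proof.
case/existsP => k /andP[_ tauk] /existsPn/(_ k); rewrite tauk andbT -ltnNge => ltkb.
by apply/existsP; exists k; rewrite ltkb.
Qed.

Lemma inactive_started M a b : a <= b -> ~~ active M a -> started M b = started M a.
Proof.
move=> le_ab /existsPn inactive; apply/existsP/existsP => -[k /andP[ltk tauk]];
  exists k; rewrite tauk andbT; last exact: leq_trans ltk le_ab.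
by have := inactive k; rewrite tauk andbT -ltnNge.
Qed.

Lemma inactive_window_load M a b : ~~ active M a -> window_load M a b = 0.
Proof.
move=> /existsPn inactive; rewrite /window_load big_pred0 // => k.
by have := inactive k; case: (a <= k); case: (tau k == M); rewrite ?andbF.
Qed.

Lemma sum_window_load a b :
  \sum_(M < n) window_load M a b = \sum_(k < n | a <= k < b) p k.
Proof. by rewrite [RHS](partition_big tau predT). Qed.

Local Open Scope ring_scope.

Definition phi (M : 'I_n) (a : nat) : rat :=
  if active M a then (load tau M a)%:R / (s a)%:R
  else if started M a then 2 else 0.

Definition Phi (a : nat) : rat := \sum_(M < n) phi M a.

Definition gain (M : 'I_n) (a b : nat) : rat :=
  if active M b then (window_load M a b)%:R / (s b)%:R
  else if active M a then 2 - (load tau M a)%:R / (s a)%:R else 0.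

Lemma active_ratio_le1 M a : active M a -> (load tau M a)%:R / (s a)%:R <= 1 :> rat.
Proof.
move=> act; have := active_load_le_slack act.
case: (posnP (s a)) => [-> _ | s_gt0 le_ls]; first by rewrite invr0 mulr0.
by rewrite ler_pdivrMr ?ltr0n // mul1r ler_nat.
Qed.

Lemma gain_ge0 M a b : 0 <= gain M a b.
Proof.
rewrite /gain; case: ifP => _; first by rewrite divr_ge0 ?ler0n.
by case: ifP => // act; have := active_ratio_le1 act; lra.
Qed.

(* Loads only grow while slacks only shrink, so ratios increase. *)
Lemma phi_gain M (a b : nat) : (a <= b)%N -> phi M a + gain M a b <= phi M b.
Proof.
move=> le_ab; rewrite /phi /gain.
case actb: (active M b).
  rewrite (active_le le_ab actb) (load_window M le_ab) natrD mulrDl lerD2r.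
  have le_sb_sa : (s b <= s a)%N by apply: nonincr le_ab (active_lt_size actb).
  case: (posnP (s b)) => [sb0 | sb_gt0].
    have := active_load_le_slack actb; rewrite sb0 (load_window M le_ab) => load_b0.
    have -> : load tau M a = 0%N by lia.
    by rewrite !mul0r.
  apply: ler_wpM2l; first by rewrite ler0n.
  by rewrite lef_pV2 ?ler_nat // posrE ltr0n //; lia.
case acta: (active M a).
  by rewrite (active_started acta (negbT actb)) addrC subrK.
by rewrite (inactive_started le_ab (negbT acta)) addr0.
Qed.

(* Either a machine finishes inside the window, jumping from a ratio at most 1
   (and 0 at a = 0) to 2, or every machine active at a is still active at b,
   and the window's load, which exceeds s b, is all counted against s b. *)
Lemma window_gain (a b : nat) : (a <= b)%N ->
  (s b < \sum_(k < n | a <= k < b) p k)%N ->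
  1 <= \sum_(M < n) gain M a b /\ (a = 0%N -> 1 < \sum_(M < n) gain M a b).
Proof.
move=> le_ab overflow.
have [/existsP[M /andP[acta inactb]] | all_active] :=
  boolP [exists M, active M a && ~~ active M b].
  have gainM : gain M a b = 2 - (load tau M a)%:R / (s a)%:R.
    by rewrite /gain (negbTE inactb) acta.
  have rest_ge0 : 0 <= \sum_(M' < n | M' != M) gain M' a b.
    by apply: sumr_ge0 => M' _; apply: gain_ge0.
  have ratio := active_ratio_le1 acta; rewrite (bigD1 M) //= gainM.
  move: (\sum_(_ < _ | _) _) rest_ge0 => g g_ge0.
  by split=> [|a0]; [lra | move: ratio; rewrite a0 load0 mul0r; lra].
have {}all_active M : active M a -> active M b.
  move=> acta; apply: contraNT all_active => inactb.
  by apply/existsP; exists M; rewrite acta.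
have gainE M : gain M a b = (window_load M a b)%:R / (s b)%:R.
  rewrite /gain; case: ifP => // inactb; case: ifP => [/all_active|inacta].
    by rewrite inactb.
  by rewrite inactive_window_load ?inacta // mul0r.
rewrite (eq_bigr _ (fun M _ => gainE M)) -mulr_suml -natr_sum sum_window_load.
suff gt1 : 1 < (\sum_(k < n | (a <= k < b)%N) p k)%:R / (s b)%:R :> rat.
  by split=> [|_]; [apply: ltW|].
case: (posnP (s b)) => [sb0 | sb_gt0]; last first.
  by rewrite ltr_pdivlMr ?ltr0n // mul1r ltr_nat.
move: overflow; rewrite -sum_window_load big1 // => M _.
case actb: (active M b).
  by have := active_load_le_slack actb; rewrite sb0 (load_window M le_ab); lia.
apply: inactive_window_load; apply: contraFN actb; apply: all_active.
Qed.

Lemma Phi0 : Phi 0 = 0.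
Proof.
rewrite /Phi big1 // => M _; rewrite /phi load0 mul0r.
by case: ifP => // _; case: ifP => // /existsP[].
Qed.

Lemma Phi_step (a b : nat) : (a <= b)%N ->
  (s b < \sum_(k < n | a <= k < b) p k)%N ->
  Phi a + 1 <= Phi b /\ (a = 0%N -> 1 < Phi b).
Proof.
move=> le_ab overflow; have [gain_ge1 gain_gt1] := window_gain le_ab overflow.
have Phi_gain : Phi a + \sum_(M < n) gain M a b <= Phi b.
  by rewrite /Phi -big_split /=; apply: ler_sum => M _; apply: phi_gain.
split=> [|a0]; first lra.
by have := gain_gt1 a0; move: Phi_gain; rewrite a0 Phi0; lra.
Qed.

(* Next-fit's closed machines are paid for by the potential at the start a of
   the current block. *)
Lemma nf_take_potential j : (0 < j <= n)%N -> exists ls L a,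
  [/\ foldl nf_step [::] (take j I) = rcons ls L, (a < j)%N,
      L = (\sum_(k < n | a <= k < j) p k)%N
    & a = 0%N /\ ls = [::] \/ (size ls)%:R < Phi a].
Proof.
elim: j => [//|j IH] /andP[_ ltjn].
rewrite (take_nth (0, 0) ltjn) foldl_rcons.
have [_ p_le_d] := valid_job valid ltjn.
have [j0 | j_gt0] := posnP j.
  subst j; rewrite take0; exists [::], (p 0), 0%N.
  by split=> //; [rewrite big_ord_range1 | left].
have := IH; rewrite j_gt0 (ltnW ltjn) => /(_ isT) [ls [L [a [-> lt_aj ->] paid]]].
rewrite nf_step_rcons -/(ptime I j) -/(dline I j).
case: ifP => fits.
  exists ls, (\sum_(k < n | a <= k < j) p k + p j)%N, a.
  by split=> //; [lia | rewrite big_ord_range_recr //; lia].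
exists (rcons ls (\sum_(k < n | a <= k < j) p k)%N), (p j), j.
split; rewrite ?big_ord_range1 //; right.
have overflow : (s j < \sum_(k < n | a <= k < j) p k)%N.
  by move/negbT: fits; rewrite /slack -ltnNge; lia.
have [Phi_incr Phi_gt1] := Phi_step (ltnW lt_aj) overflow.
rewrite size_rcons -addn1 natrD.
by case: paid => [[a0 ->] | paid]; [rewrite add0r; apply: Phi_gt1 | lra].
Qed.

(* Every machine contributes at most 2, and the machine of the last job, still
   active, at most 1. *)
Lemma Phi_le_nmach M0 a : active M0 a -> Phi a <= ((2 * nmach tau).-1)%:R.
Proof.
move=> act0; set img := [set tau j | j : 'I_n].
have inimg M b : started M b || active M b -> M \in img.
  by case/orP => /existsP[k /andP[_ /eqP <-]]; apply: imset_f.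
have M0img : M0 \in img by rewrite (inimg M0 a) ?act0 ?orbT.
have -> : ((2 * nmach tau).-1 = #|img| + #|img :\ M0|)%N.
  by have := cardsD1 M0 img; rewrite M0img /nmach -/img; lia.
have -> : (#|img| + #|img :\ M0| = \sum_(M < n) ((M \in img) + (M \in img :\ M0)))%N.
  rewrite big_split /= -!sum1_card !(big_mkcond (fun i => i \in _)) /=.
  by congr (_ + _); apply: eq_bigr => i _; case: (i \in _).
rewrite natr_sum; apply: ler_sum => M _; rewrite /phi.
case: ifP => actM.
  have Mimg : M \in img by rewrite (inimg M a) ?actM ?orbT.
  rewrite Mimg natrD; have := active_ratio_le1 actM.
  by case: (M \in img :\ M0) => /=; lra.
case: ifP => // stM; rewrite !inE (inimg M a) ?stM //.
by have -> : M != M0 by apply: contraFneq actM => ->.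
Qed.

Lemma NF_lt_2nmach : (0 < n)%N -> (NF I < 2 * nmach tau)%N.
Proof.
move=> n_gt0; have ltn1 : (n.-1 < n)%N by rewrite prednK.
have := @nf_take_potential n; rewrite n_gt0 leqnn.
move=> /(_ isT) [ls [L [a [nf lt_an _ paid]]]].
rewrite /NF -{1}(take_size I) nf size_rcons.
case: paid => [[_ ->] | paid].
  suff : (0 < nmach tau)%N by rewrite /=; lia.
  by apply/card_gt0P; exists (tau (Ordinal ltn1)); apply: imset_f.
have act : active (tau (Ordinal ltn1)) a.
  by apply/existsP; exists (Ordinal ltn1); rewrite eqxx andbT /=; lia.
have := lt_le_trans paid (Phi_le_nmach act); rewrite ltr_nat; lia.
Qed.

End Potential.

Lemma nmach_le_size I (tau : schedule I) : nmach tau <= size I.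
Proof. by rewrite /nmach (leq_trans (leq_imset_card _ _)) ?card_ord. Qed.

Lemma OPT_le_size I : OPT I <= size I.
Proof.
apply: (big_ind (fun x => x <= size I)) => // [x y le_x _ | tau _].
  exact: leq_trans (geq_minl x y) le_x.
exact: nmach_le_size.
Qed.

Lemma OPT_le_nmach I (tau : schedule I) : feasible tau -> OPT I <= nmach tau.
Proof.
move=> feas; rewrite /OPT.
have : tau \in index_enum (schedule I) by rewrite mem_index_enum.
elim: (index_enum _) => //= sigma r IH; rewrite inE big_cons.
case/predU1P => [<- | /IH le_r]; first by rewrite feas geq_minl.
by case: ifP => // _; apply: leq_trans (geq_minr _ _) le_r.
Qed.

Lemma NF_lt_2OPT I : valid_instance I -> slack_nonincr I -> 0 < size I ->
  NF I < 2 * OPT I.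
Proof.
move=> valid nonincr n_gt0; apply: (big_ind (fun x => NF I < 2 * x)).
- by have := NF_le_size I; lia.
- by move=> x y; rewrite /minn; case: ifP.
- by move=> tau feas; apply: NF_lt_2nmach.
Qed.

Lemma first_fit_2_approx I : valid_instance I -> slack_nonincr I ->
  NF I = FF I /\ (OPT I = 1 -> FF I = 1) /\ (2 <= OPT I -> FF I < 2 * OPT I).
Proof.
move=> valid nonincr; rewrite FF_eq_NF //; split=> //.
have le_OPT_n := OPT_le_size I.
have bounds : 0 < OPT I -> 0 < NF I < 2 * OPT I.
  move=> OPT_gt0; have n_gt0 : 0 < size I by lia.
  by rewrite NF_gt0 ?NF_lt_2OPT.
by split=> OPT_ge; (have /bounds : 0 < OPT I by lia); lia.
Qed.

Section TightInstance.

Variable k : nat.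
Hypothesis k_gt0 : 0 < k.
Local Notation T := (tight_instance k).
Local Notation N := (size T).

Lemma size_tight : N = 3 * k + 1.
Proof. rewrite size_cat size_flatten_pairs size_iota size_nseq; lia. Qed.

Lemma nth_tight j : nth (0, 0) T j =
  if j < 2 * k then (if odd j then (1, k + 1) else (k, 2 * k))
  else if j < 3 * k + 1 then (k + 1, 2 * k + 1) else (0, 0).
Proof.
rewrite nth_cat size_flatten_pairs nth_flatten_pairs size_iota.
case: ifP => [-> // | le_2k_j]; rewrite nth_nseq.
by have -> : (j - 2 * k < k.+1) = (j < 3 * k + 1) by move/negbT: le_2k_j; lia.
Qed.

Lemma ptime_tight j : j < 3 * k + 1 ->
  ptime T j = if j < 2 * k then (if odd j then 1 else k) else k + 1.
Proof. by move=> ltj; rewrite /ptime nth_tight ltj; case: ifP => //; case: ifP. Qed.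

Lemma slack_tight j : j < 3 * k + 1 -> slack T j = k.
Proof.
move=> ltj; rewrite /slack /dline /ptime nth_tight ltj.
by case: ifP => _; [case: ifP => _|]; rewrite /=; lia.
Qed.

Lemma valid_tight : valid_instance T.
Proof.
apply/(all_nthP (0, 0)) => j; rewrite size_tight => ltj; rewrite nth_tight ltj.
by case: ifP => _; [case: ifP => _|]; rewrite /=; lia.
Qed.

Lemma nonincr_tight : slack_nonincr T.
Proof.
by move=> i j le_ij; rewrite size_tight => ltj; rewrite !slack_tight //; lia.
Qed.

(* On the a/b jobs next-fit alternates between opening a machine for a_i and
   topping it up with b_i; every c_i then needs a machine of its own. *)
Lemma FF_tight : FF T = 2 * k + 1.
Proof.
rewrite (FF_eq_NF valid_tight nonincr_tight) /NF /tight_instance foldl_cat.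
have pairs j (s : seq nat) : foldl nf_step (nseq j (k + 1))
    (flatten [seq [:: (k, 2 * k); (1, k + 1)] | _ <- s]) = nseq (j + size s) (k + 1).
  elim: s j => [|_ s IH] j /=; first by rewrite addn0.
  rewrite -[j + _]addSnnS -IH; congr foldl; case: j => [|j]; first by rewrite /= leqnn.
  rewrite nseq_rcons nf_step_rcons /= ifN; last by rewrite -ltnNge; lia.
  by rewrite nf_step_rcons /= leqnn -!nseq_rcons.
have cs j m : 0 < j ->
    foldl nf_step (nseq j (k + 1)) (nseq m (k + 1, 2 * k + 1)) = nseq (j + m) (k + 1).
  elim: m j => [|m IH] j j_gt0 /=; first by rewrite addn0.
  rewrite -[j + _]addSnnS -IH //; congr foldl; case: j j_gt0 => // j _.
  rewrite nseq_rcons nf_step_rcons /= ifN; last by rewrite -ltnNge; lia.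
  by rewrite -!nseq_rcons.
rewrite -[[::]]/(nseq 0 (k + 1)) pairs size_iota cs ?size_nseq //; lia.
Qed.

(* Jobs are 0-based: a_(m+1), b_(m+1) and c_(m+1) are the jobs 2m, 2m + 1 and
   2k + m.  Machine m < k runs a_(m+1) then c_(m+1); machine k runs all the b_i
   then c_(k+1). *)
Definition tight_machine (x : nat) : nat :=
  if x < 2 * k then (if odd x then k else x./2) else x - 2 * k.

Lemma tight_machine_le x : x < 3 * k + 1 -> tight_machine x <= k.
Proof. by rewrite /tight_machine; case: ifP => ltx; [case: ifP|]; lia. Qed.

Lemma ltn_tight (j : 'I_N) : j < 3 * k + 1.
Proof. by rewrite -size_tight. Qed.

Definition tight_schedule : schedule T := [ffun j : 'I_N => insubd j (tight_machine j)].

Lemma tight_scheduleE (j : 'I_N) : val (tight_schedule j) = tight_machine j.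
Proof.
rewrite ffunE val_insubd (leq_ltn_trans (tight_machine_le (ltn_tight j))) //.
by rewrite size_tight; lia.
Qed.

Lemma tight_front_load m : m <= k ->
  \sum_(x < N | (x < 2 * k) && (tight_machine x == m)) ptime T x <= k.
Proof.
rewrite leq_eqVlt => /orP[/eqP-> | ltmk].
  rewrite (eq_bigl (fun x : 'I_N => odd x && (x < 2 * k))); last first.
    move=> x; rewrite /tight_machine.
    by case: ifP => ltx; [case: ifP|]; rewrite /= ?andbF ?andbT //; lia.
  rewrite (eq_bigr (fun _ => 1)); last first.
    by move=> x /andP[oddx ltx]; rewrite ptime_tight ?ltn_tight // ltx oddx.
  rewrite -(big_mkord (fun x => odd x && (x < 2 * k)) (fun _ => 1)).
  rewrite -(big_nat_widen 0 (2 * k) N odd (fun _ => 1)).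
    by rewrite sum_odd_nat; lia.
  by rewrite size_tight; lia.
have lt2m : 2 * m < N by rewrite size_tight; lia.
rewrite (eq_bigl (fun x => x == Ordinal lt2m)); last first.
  move=> x; rewrite -val_eqE /= /tight_machine.
  by case: ifP => ltx; [case: ifP|]; rewrite /= ?andbF //; lia.
rewrite big_pred1_eq ptime_tight /=; last by lia.
by rewrite ifT ?oddM //; lia.
Qed.

Lemma tight_schedule_load (j : 'I_N) : load tight_schedule (tight_schedule j) j <= k.
Proof.
apply: leq_trans (tight_front_load (tight_machine_le (ltn_tight j))).
apply: leq_sum_subpred => x /andP[ltxj]; rewrite -val_eqE !tight_scheduleE.
move=> /eqP same; rewrite same eqxx andbT; move: same; rewrite /tight_machine.
by case: ifP => // /negbT; case: ifP => [|_]; [case: ifP|]; lia.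
Qed.

Lemma feasible_tight_schedule : feasible tight_schedule.
Proof.
apply: feasible_of_load_le_slack valid_tight _ => j.
by rewrite slack_tight ?ltn_tight ?tight_schedule_load.
Qed.

Lemma nmach_tight_schedule : nmach tight_schedule <= k.+1.
Proof.
have small x : x \in [set tight_schedule j | j : 'I_N] -> x < k.+1.
  by case/imsetP => j _ ->; rewrite ltnS tight_scheduleE tight_machine_le ?ltn_tight.
rewrite /nmach -(card_in_imset (f := fun x : 'I_N => inord x : 'I_k.+1)); last first.
  move=> x y /small ltx /small lty /(congr1 (@nat_of_ord k.+1)).
  by rewrite !inordK // => /val_inj.
by rewrite (leq_trans (max_card _)) ?card_ord.
Qed.

(* The k + 1 jobs c_i pairwise exclude each other. *)
Lemma nmach_tight_ge (tau : schedule T) : feasible tau -> k.+1 <= nmach tau.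
Proof.
move=> feas; have lt_c (i : 'I_k.+1) : 2 * k + i < N.
  by rewrite size_tight; have := ltn_ord i; lia.
pose c i := Ordinal (lt_c i).
have c_inj : injective c by move=> i i' /(congr1 val) /addnI /val_inj.
rewrite -[k.+1]card_ord -(card_imset _ c_inj).
apply: (card_conflicting_le_nmach feas) => _ _ /imsetP[i _ ->] /imsetP[i' _ ->] _.
rewrite slack_tight ?ptime_tight ?ltn_tight //= ifN //; lia.
Qed.

Lemma OPT_tight : OPT T = k + 1.
Proof.
apply/eqP; rewrite eqn_leq addn1; apply/andP; split.
  exact: leq_trans (OPT_le_nmach feasible_tight_schedule) nmach_tight_schedule.
apply: (big_ind (fun x => k.+1 <= x)) => [| x y | tau]; last exact: nmach_tight_ge.
  by rewrite size_tight; lia.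
by rewrite leq_min => -> ->.
Qed.

End TightInstance.

Theorem mainTheorem5 :
  (forall I : instance, valid_instance I -> slack_nonincr I ->
     NF I = FF I /\
     (OPT I = 1 -> FF I = 1) /\
     (2 <= OPT I -> FF I < 2 * OPT I)) /\
  (forall k : nat, 1 <= k ->
     valid_instance (tight_instance k) /\ slack_nonincr (tight_instance k) /\
     size (tight_instance k) = 3 * k + 1 /\
     OPT (tight_instance k) = k + 1 /\ FF (tight_instance k) = 2 * k + 1).
Proof.
split; first exact: first_fit_2_approx.
move=> k k_gt0; split; first exact: valid_tight.
split; first exact: nonincr_tight.
split; first exact: size_tight.
by split; [apply: OPT_tight | apply: FF_tight].
Qed.
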